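(* Let $Y$ be a non-negative integer-valued random variable with finite second moment. For $t\ge 0$ let $m_Y(t)=\mathbb{E}[Y-t\mid Y>t]$ (defined when $\mathbb{P}(Y>t)>0$). If \[ m_Y(t)\ge \mathbb{E}[Y]+\tfrac12\quad\text{for all } t\ge 0, \] then $\sqrt{\tfrac12\mathbb{E}[Y^2]}\ge\mathbb{E}[Y]$. Likewise, if $m_Y(t)\le\mathbb{E}[Y]+\tfrac12$ for all $t\ge0$, then $\sqrt{\tfrac12\mathbb{E}[Y^2]}\le\mathbb{E}[Y]$.
   Context: In the discrete setting the mean excess function is the genuine conditional expectation, so $m_Y(0)=\mathbb{E}[Y\mid Y>0]\ge\mathbb{E}[Y]$. *)

From Stdlib Require Import Reals.
From Coquelicot Require Import Coquelicot.
Open Scope R_scope.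

(* A non-negative integer-valued random variable Y is described by its law:
   p n = P(Y = n). *)
Definition is_pmf (p : nat -> R) : Prop :=
  (forall n, 0 <= p n) /\ is_series p 1.

Definition finite_second_moment (p : nat -> R) : Prop :=
  ex_series (fun n => (INR n) ^ 2 * p n).

Definition mean (p : nat -> R) : R := Series (fun n => INR n * p n).

Definition second_moment (p : nat -> R) : R :=
  Series (fun n => (INR n) ^ 2 * p n).

Definition tail_prob (p : nat -> R) (t : R) : R :=
  Series (fun n => if Rlt_dec t (INR n) then p n else 0).

(* m_Y(t) = E[Y - t | Y > t] = E[(Y - t) 1_{Y>t}] / P(Y > t)
   (meaningful when P(Y > t) > 0) *)
Definition mean_excess (p : nat -> R) (t : R) : R :=
  Series (fun n => if Rlt_dec t (INR n) then (INR n - t) * p n else 0)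
  / tail_prob p t.

(* Summing over the integer levels K >= 0, the layer-cake identities
   sum_K P(Y > K) = E[Y] and sum_K E[(Y - K)^+] = E[Y (Y + 1) / 2] turn the
   levelwise hypothesis E[(Y - K)^+] >= (E[Y] + 1/2) P(Y > K) into
   (E[Y] + 1/2) E[Y] <= (E[Y^2] + E[Y]) / 2, i.e. E[Y]^2 <= E[Y^2] / 2; the
   reverse inequality is symmetric.  The interchange of the two summations is
   justified by truncation: after K levels the remainder is at most
   Y^2 1_{Y > K}, whose expectation vanishes since E[Y^2] < oo. *)

From Stdlib Require Import Reals Lra Lia.
From Coquelicot Require Import Coquelicot.
Open Scope R_scope.

Section Expectation.

Variable p : nat -> R.
Hypothesis p_ge0 : forall n, 0 <= p n.

Definition expect (f : nat -> R) : R := Series (fun n => f n * p n).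

Definition integrable (f : nat -> R) : Prop := ex_series (fun n => f n * p n).

Definition tail_part (K : nat) (f : nat -> R) (n : nat) : R :=
  if (K <? n)%nat then f n else 0.

Lemma integrable_dominated (f g : nat -> R) :
  (forall n, Rabs (f n) <= g n) -> integrable g -> integrable f.
Proof.
  intros Hfg Hg.
  apply (@ex_series_le R_AbsRing R_CompleteNormedModule _ (fun n => g n * p n)); [|exact Hg].
  intros n; change (Rabs (f n * p n) <= g n * p n).
  rewrite Rabs_mult, (Rabs_pos_eq (p n)) by apply p_ge0.
  apply Rmult_le_compat_r; [apply p_ge0|apply Hfg].
Qed.

Lemma integrableD (f g : nat -> R) :
  integrable f -> integrable g -> integrable (fun n => f n + g n).
Proof.
  intros Hf Hg; unfold integrable.
  apply (ex_series_ext (fun n => f n * p n + g n * p n)); [intros; simpl; ring|].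
  exact (ex_series_plus _ _ Hf Hg).
Qed.

Lemma integrableZ (c : R) (f : nat -> R) : integrable f -> integrable (fun n => c * f n).
Proof.
  intros Hf; unfold integrable.
  apply (ex_series_ext (fun n => c * (f n * p n))); [intros; simpl; ring|].
  exact (ex_series_scal_l c _ Hf).
Qed.

Lemma integrableB (f g : nat -> R) :
  integrable f -> integrable g -> integrable (fun n => f n - g n).
Proof.
  intros Hf Hg.
  apply (ex_series_ext (fun n => (f n + -1 * g n) * p n)); [intros; simpl; ring|].
  exact (integrableD _ _ Hf (integrableZ (-1) _ Hg)).
Qed.

Lemma integrable_tail_part (K : nat) (g : nat -> R) :
  (forall n, 0 <= g n) -> integrable g -> integrable (tail_part K g).
Proof.
  intros g_ge0; apply integrable_dominated; intros n; unfold tail_part.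
  destruct (K <? n)%nat; [rewrite Rabs_pos_eq|rewrite Rabs_R0]; auto with real.
Qed.

Lemma expectD (f g : nat -> R) : integrable f -> integrable g ->
  expect (fun n => f n + g n) = expect f + expect g.
Proof.
  intros Hf Hg; unfold expect; rewrite <- Series_plus by assumption.
  apply Series_ext; intros; ring.
Qed.

Lemma expectZ (c : R) (f : nat -> R) : expect (fun n => c * f n) = c * expect f.
Proof.
  unfold expect; rewrite <- Series_scal_l; apply Series_ext; intros; ring.
Qed.

Lemma expect0 : expect (fun _ => 0) = 0.
Proof.
  unfold expect; rewrite Series_scal_l; ring.
Qed.

Lemma expect_le (f g : nat -> R) : integrable f -> integrable g ->
  (forall n, f n <= g n) -> expect f <= expect g.
Proof.
  intros Hf Hg Hfg.
  assert (H : expect (fun _ => 0) <= Series (fun n => g n * p n - f n * p n)).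
  { apply Series_le.
    - intros n; specialize (Hfg n); specialize (p_ge0 n); split; [lra|nra].
    - exact (ex_series_minus _ _ Hg Hf). }
  rewrite expect0, Series_minus in H by assumption.
  unfold expect; lra.
Qed.

Lemma expect_ge0 (f : nat -> R) : integrable f -> (forall n, 0 <= f n) -> 0 <= expect f.
Proof.
  intros Hf f_ge0; rewrite <- expect0; apply expect_le; auto.
  apply (integrable_dominated _ f); [intros; rewrite Rabs_R0; auto|exact Hf].
Qed.

Lemma expectB (f g : nat -> R) : integrable f -> integrable g ->
  expect (fun n => f n - g n) = expect f - expect g.
Proof.
  intros Hf Hg.
  transitivity (expect (fun n => f n + -1 * g n)); [apply Series_ext; intros; ring|].
  rewrite expectD, expectZ by auto using integrableZ; ring.
Qed.

Lemma expect_eq0_term (f : nat -> R) : integrable f -> (forall n, 0 <= f n) ->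
  expect f = 0 -> forall n, f n * p n = 0.
Proof.
  intros Hf f_ge0 Ef0 n.
  set (a := fun n => f n * p n).
  assert (a_ge0 : forall n, 0 <= a n) by (intros m; apply Rmult_le_pos; auto).
  assert (Ha : a n <= sum_f_R0 a n).
  { destruct n as [|n]; [simpl; lra|].
    rewrite tech5; pose proof (cond_pos_sum a n a_ge0); lra. }
  pose proof (sum_incr a n _ (proj1 (is_series_Reals a _) (Series_correct a Hf)) a_ge0).
  specialize (a_ge0 n); unfold expect in Ef0; fold a in Ef0; unfold a in *; lra.
Qed.

Lemma sum_Sn_R (a : nat -> R) (K : nat) : @eq R (sum_n a (S K)) (sum_n a K + a (S K)).
Proof. exact (@sum_Sn R_AbelianMonoid a K). Qed.

Lemma integrable_sum_n (f : nat -> nat -> R) (K : nat) :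
  (forall k, integrable (f k)) -> integrable (fun n => sum_n (fun k => f k n) K).
Proof.
  intros Hf; induction K as [|K IH].
  - apply (ex_series_ext (fun n => f 0%nat n * p n)); [intros; rewrite sum_O; reflexivity|apply Hf].
  - apply (ex_series_ext (fun n => (sum_n (fun k => f k n) K + f (S K) n) * p n)).
    + intros n; rewrite sum_Sn_R; reflexivity.
    + exact (integrableD _ _ IH (Hf (S K))).
Qed.

Lemma expect_sum_n (f : nat -> nat -> R) (K : nat) :
  (forall k, integrable (f k)) ->
  expect (fun n => sum_n (fun k => f k n) K) = sum_n (fun k => expect (f k)) K.
Proof.
  intros Hf; induction K as [|K IH].
  - rewrite sum_O; apply Series_ext; intros n; rewrite sum_O; reflexivity.
  - rewrite sum_Sn_R, <- IH, <- expectD by auto using integrable_sum_n.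
    apply Series_ext; intros n; rewrite sum_Sn_R; reflexivity.
Qed.

Lemma expect_tail_part_cvg (g : nat -> R) :
  integrable g -> is_lim_seq (fun K => expect (tail_part K g)) 0.
Proof.
  intros Hg; set (a := fun n => g n * p n).
  assert (Htail : forall K, expect (tail_part K g) = Series a - sum_n a K).
  { intros K; unfold expect.
    rewrite (Series_incr_n_aux _ (S K)).
    2:{ intros k Hk; unfold tail_part; destruct (Nat.ltb_spec K k); [lia|ring]. }
    rewrite (Series_incr_n a (S K)), sum_n_Reals by (lia || exact Hg).
    rewrite (Series_ext _ (fun k => a (S K + k)%nat)); [simpl; ring|].
    intros k; unfold tail_part, a; destruct (Nat.ltb_spec K (S K + k)); [reflexivity|lia]. }
  apply (is_lim_seq_ext (fun K => Series a - sum_n a K)); [intros; symmetry; apply Htail|].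
  replace (Finite 0) with (Finite (Series a - Series a)) by (f_equal; ring).
  exact (is_lim_seq_minus' _ _ _ _ (is_lim_seq_const _) (Series_correct a Hg)).
Qed.

Lemma is_series_expect (f : nat -> nat -> R) (F g : nat -> R) :
  (forall k, integrable (f k)) -> integrable F -> integrable g -> (forall n, 0 <= g n) ->
  (forall K n, Rabs (F n - sum_n (fun k => f k n) K) <= tail_part K g n) ->
  is_series (fun k => expect (f k)) (expect F).
Proof.
  intros Hf HF Hg g_ge0 Hrem.
  assert (Htail := expect_tail_part_cvg g Hg).
  change (is_lim_seq (sum_n (fun k => expect (f k))) (expect F)).
  apply (is_lim_seq_le_le (fun K => expect F - expect (tail_part K g)) _
                          (fun K => expect F + expect (tail_part K g))).
  - intros K; rewrite <- expect_sum_n by exact Hf.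
    assert (HS := integrable_sum_n f K Hf).
    assert (HT := integrable_tail_part K g g_ge0 Hg).
    rewrite <- expectB, <- expectD by auto.
    specialize (Hrem K); split; apply expect_le; auto using integrableD, integrableB;
      intros n; specialize (Hrem n); apply Rabs_le_between in Hrem; lra.
  - pose proof (is_lim_seq_minus' _ _ _ _ (is_lim_seq_const (expect F)) Htail) as H.
    rewrite Rminus_0_r in H; exact H.
  - pose proof (is_lim_seq_plus' _ _ _ _ (is_lim_seq_const (expect F)) Htail) as H.
    rewrite Rplus_0_r in H; exact H.
Qed.

End Expectation.

Lemma Rlt_dec_INR {A : Type} (K n : nat) (a b : A) :
  (if Rlt_dec (INR K) (INR n) then a else b) = if (K <? n)%nat then a else b.
Proof.
  destruct (Rlt_dec (INR K) (INR n)) as [H|H]; destruct (Nat.ltb_spec K n) as [H'|H'];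
    auto; exfalso.
  - apply INR_lt in H; lia.
  - apply H, lt_INR, H'.
Qed.

Lemma INR_le_sqr (m : nat) : INR m <= INR m ^ 2.
Proof.
  destruct m as [|m]; [simpl; lra|].
  rewrite S_INR; pose proof (pos_INR m); nra.
Qed.

Definition triangle (m : nat) : R := INR m * (INR m + 1) / 2.

Lemma triangle_sub1 (m : nat) : triangle m - triangle (m - 1) = INR m.
Proof.
  unfold triangle; destruct m as [|m]; [simpl; field|].
  rewrite Nat.sub_succ, Nat.sub_0_r, S_INR; field.
Qed.

Lemma triangle_bounds (m : nat) : 0 <= triangle m <= INR m ^ 2.
Proof.
  pose proof (pos_INR m); pose proof (INR_le_sqr m); unfold triangle; split; nra.
Qed.

Lemma sum_n_tail_part_one (n K : nat) :
  @eq R (sum_n (fun k => tail_part k (fun _ => 1) n) K) (INR n - INR (n - S K)).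
Proof.
  induction K as [|K IH].
  - rewrite sum_O; unfold tail_part; destruct (Nat.ltb_spec 0 n).
    + rewrite minus_INR by lia; simpl; ring.
    + replace n with 0%nat by lia; simpl; ring.
  - rewrite sum_Sn_R, IH; unfold tail_part; destruct (Nat.ltb_spec (S K) n).
    + replace (n - S K)%nat with (S (n - S (S K))) by lia; rewrite S_INR; ring.
    + replace (n - S K)%nat with 0%nat by lia; replace (n - S (S K))%nat with 0%nat by lia.
      ring.
Qed.

Lemma sum_n_sub_nat (n K : nat) :
  @eq R (sum_n (fun k => INR (n - k)) K) (triangle n - triangle (n - S K)).
Proof.
  induction K as [|K IH].
  - rewrite sum_O, Nat.sub_0_r, triangle_sub1; reflexivity.
  - rewrite sum_Sn_R, IH.
    replace (n - S (S K))%nat with (n - S K - 1)%nat by lia.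
    pose proof (triangle_sub1 (n - S K)); lra.
Qed.

Lemma Rabs_le_tail_part_sqr (h : nat -> R) (n K : nat) :
  h 0%nat = 0 -> (forall m, 0 <= h m <= INR m ^ 2) ->
  Rabs (h (n - S K)%nat) <= tail_part K (fun m => INR m ^ 2) n.
Proof.
  intros h0 Hh; unfold tail_part; destruct (Nat.ltb_spec K n).
  - rewrite Rabs_pos_eq by apply Hh.
    apply (Rle_trans _ (INR (n - S K) ^ 2)); [apply Hh|].
    apply pow_incr; split; [apply pos_INR|apply le_INR; lia].
  - replace (n - S K)%nat with 0%nat by lia; rewrite h0, Rabs_R0; lra.
Qed.

Lemma is_series_le (a b : nat -> R) (la lb : R) :
  (forall n, a n <= b n) -> is_series a la -> is_series b lb -> la <= lb.
Proof.
  intros Hab Ha Hb.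
  apply (is_lim_seq_le (sum_n a) (sum_n b) la lb); [|exact Ha|exact Hb].
  intros K; rewrite !sum_n_Reals; apply sum_Rle; auto.
Qed.

(* Truncated subtraction makes [INR (n - K)] the positive part, so this is E[(Y - K)^+]. *)
Definition excess_mass (p : nat -> R) (K : nat) : R := expect p (fun n => INR (n - K)).

Section LayerCake.

Variable p : nat -> R.
Hypothesis Hp : is_pmf p.
Hypothesis H2 : finite_second_moment p.

Let p_ge0 : forall n, 0 <= p n := proj1 Hp.

Lemma tail_prob_nat (K : nat) : tail_prob p (INR K) = expect p (tail_part K (fun _ => 1)).
Proof.
  apply Series_ext; intros n; unfold tail_part; rewrite Rlt_dec_INR.
  destruct (K <? n)%nat; ring.
Qed.

Lemma mean_excess_nat (K : nat) :
  mean_excess p (INR K) = excess_mass p K / tail_prob p (INR K).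
Proof.
  unfold mean_excess; f_equal.
  apply Series_ext; intros n; rewrite Rlt_dec_INR.
  destruct (Nat.ltb_spec K n).
  - rewrite minus_INR by lia; reflexivity.
  - replace (n - K)%nat with 0%nat by lia; simpl; ring.
Qed.

Lemma integrable_one : integrable p (fun _ => 1).
Proof.
  exists 1; apply (is_series_ext p); [intros; simpl; ring|apply Hp].
Qed.

Lemma integrable_tail_indicator (K : nat) : integrable p (tail_part K (fun _ => 1)).
Proof.
  apply (integrable_tail_part p p_ge0); [intros; lra|exact integrable_one].
Qed.

Lemma integrable_INR : integrable p INR.
Proof.
  apply (integrable_dominated p p_ge0 _ (fun n => INR n ^ 2)); [|exact H2].
  intros n; rewrite Rabs_pos_eq by apply pos_INR; apply INR_le_sqr.
Qed.

Lemma integrable_sub_nat (K : nat) : integrable p (fun n => INR (n - K)).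
Proof.
  apply (integrable_dominated p p_ge0 _ INR); [|exact integrable_INR].
  intros n; rewrite Rabs_pos_eq by apply pos_INR; apply le_INR; lia.
Qed.

Lemma mean_ge0 : 0 <= mean p.
Proof. exact (expect_ge0 p p_ge0 _ integrable_INR pos_INR). Qed.

Lemma tail_prob_nat_ge0 (K : nat) : 0 <= tail_prob p (INR K).
Proof.
  rewrite tail_prob_nat; apply (expect_ge0 p p_ge0); [apply integrable_tail_indicator|].
  intros n; unfold tail_part; destruct (K <? n)%nat; lra.
Qed.

Lemma excess_mass_ge0 (K : nat) : 0 <= excess_mass p K.
Proof. exact (expect_ge0 p p_ge0 _ (integrable_sub_nat K) (fun n => pos_INR _)). Qed.

Lemma excess_mass_eq0 (K : nat) : tail_prob p (INR K) = 0 -> excess_mass p K = 0.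
Proof.
  rewrite tail_prob_nat; intros Hzero.
  assert (no_mass_above : forall n, tail_part K (fun _ => 1) n * p n = 0).
  { apply (expect_eq0_term p p_ge0); [apply integrable_tail_indicator| |exact Hzero].
    intros n; unfold tail_part; destruct (K <? n)%nat; lra. }
  rewrite <- (expect0 p); apply Series_ext; intros n.
  specialize (no_mass_above n); unfold tail_part in no_mass_above.
  destruct (Nat.ltb_spec K n).
  - rewrite Rmult_1_l in no_mass_above; rewrite no_mass_above; ring.
  - replace (n - K)%nat with 0%nat by lia; simpl; ring.
Qed.

Lemma is_series_tail_prob : is_series (fun K => tail_prob p (INR K)) (mean p).
Proof.
  apply (is_series_ext (fun K => expect p (tail_part K (fun _ => 1))));
    [intros; symmetry; apply tail_prob_nat|].
  apply (is_series_expect p p_ge0 _ INR (fun n => INR n ^ 2)).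
  - exact integrable_tail_indicator.
  - exact integrable_INR.
  - exact H2.
  - intros n; apply pow2_ge_0.
  - intros K n; rewrite sum_n_tail_part_one.
    replace (INR n - (INR n - INR (n - S K))) with (INR (n - S K)) by ring.
    apply (Rabs_le_tail_part_sqr INR); [reflexivity|].
    intros m; split; [apply pos_INR|apply INR_le_sqr].
Qed.

Lemma expect_triangle : expect p triangle = (second_moment p + mean p) / 2.
Proof.
  transitivity (expect p (fun n => / 2 * (INR n ^ 2 + INR n)));
    [apply Series_ext; intros; unfold triangle; field|].
  rewrite expectZ, expectD by (exact H2 || exact integrable_INR).
  unfold second_moment, mean, expect; field.
Qed.

Lemma is_series_excess_mass :
  is_series (excess_mass p) ((second_moment p + mean p) / 2).
Proof.
  rewrite <- expect_triangle.
  apply (is_series_expect p p_ge0 _ triangle (fun n => INR n ^ 2)).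
  - exact integrable_sub_nat.
  - apply (integrable_dominated p p_ge0 _ (fun n => INR n ^ 2)); [|exact H2].
    intros n; rewrite Rabs_pos_eq; apply triangle_bounds.
  - exact H2.
  - intros n; apply pow2_ge_0.
  - intros K n; rewrite sum_n_sub_nat.
    replace (triangle n - (triangle n - triangle (n - S K))) with (triangle (n - S K)) by ring.
    apply Rabs_le_tail_part_sqr; [unfold triangle; simpl; field|apply triangle_bounds].
Qed.

Lemma excess_mass_ge_of_mean_excess_ge (c : R) (K : nat) :
  (0 < tail_prob p (INR K) -> c <= mean_excess p (INR K)) ->
  c * tail_prob p (INR K) <= excess_mass p K.
Proof.
  rewrite mean_excess_nat; intros Hc.
  destruct (tail_prob_nat_ge0 K) as [Hpos|Hzero].
  - apply Rle_div_r; [exact Hpos|exact (Hc Hpos)].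
  - rewrite <- Hzero, Rmult_0_r; apply excess_mass_ge0.
Qed.

Lemma excess_mass_le_of_mean_excess_le (c : R) (K : nat) :
  (0 < tail_prob p (INR K) -> mean_excess p (INR K) <= c) ->
  excess_mass p K <= c * tail_prob p (INR K).
Proof.
  rewrite mean_excess_nat; intros Hc.
  destruct (tail_prob_nat_ge0 K) as [Hpos|Hzero].
  - apply Rle_div_l; [exact Hpos|exact (Hc Hpos)].
  - rewrite <- Hzero, Rmult_0_r, excess_mass_eq0 by auto; lra.
Qed.

End LayerCake.

Theorem proposition10 (p : nat -> R) (Hp : is_pmf p)
  (H2 : finite_second_moment p) :
  ((forall t : R, 0 <= t -> 0 < tail_prob p t ->
       mean p + 1 / 2 <= mean_excess p t) ->
     mean p <= sqrt (second_moment p / 2))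
  /\
  ((forall t : R, 0 <= t -> 0 < tail_prob p t ->
       mean_excess p t <= mean p + 1 / 2) ->
     sqrt (second_moment p / 2) <= mean p).
Proof.
  assert (Hmu := mean_ge0 p Hp H2).
  assert (Htail := is_series_scal_l (mean p + 1 / 2) _ _ (is_series_tail_prob p Hp H2)).
  assert (Hexcess := is_series_excess_mass p Hp H2).
  split; intros Hc.
  - assert (Hsum : (mean p + 1 / 2) * mean p <= (second_moment p + mean p) / 2).
    { refine (is_series_le _ _ _ _ _ Htail Hexcess); intros K.
      exact (excess_mass_ge_of_mean_excess_ge p Hp H2 _ K (Hc (INR K) (pos_INR K))). }
    rewrite <- (sqrt_pow2 (mean p) Hmu); apply sqrt_le_1_alt; lra.
  - assert (Hsum : (second_moment p + mean p) / 2 <= (mean p + 1 / 2) * mean p).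
    { refine (is_series_le _ _ _ _ _ Hexcess Htail); intros K.
      exact (excess_mass_le_of_mean_excess_le p Hp _ K (Hc (INR K) (pos_INR K))). }
    rewrite <- (sqrt_pow2 (mean p) Hmu); apply sqrt_le_1_alt; lra.
Qed.
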